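(* Let $w \in \mathfrak{S}_n$ and let $i \in \textsf{supp}(w)$ be unconfined in the reduced words of $w$. Then for every $u \preceq w$ in the Bruhat order, either $i \notin \textsf{supp}(u)$, or $i$ is unconfined in the reduced words of $u$.
   Context: $\sigma_i$ ($1\le i\le n-1$) is the simple transposition swapping $i$ and $i+1$; products are compositions of maps. A reduced word of $w$ is a word $i_1\cdots i_\ell$ of minimal length with $w=\sigma_{i_1}\cdots\sigma_{i_\ell}$. $\textsf{supp}(w)$ is the set of letters appearing in (any) reduced word of $w$. Bruhat order: $u \preceq w$ iff some reduced word of $u$ is a subword of some reduced word of $w$. Given a reduced word $s$ in which the letter $i$ appears exactly once, $i$ is unconfined in $s$ if that occurrence is not between two occurrences of $i+1$ and not between two occurrences of $i-1$ in $s$. If $i$ is unconfined in one reduced word of $w$, it appears exactly once and is unconfined in every reduced word of $w$; this is what ''unconfined in the reduced words of $w$'' means. *)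

From mathcomp Require Import all_boot all_fingroup.
Set Implicit Arguments. Unset Strict Implicit. Unset Printing Implicit Defensive.

(* Letters are natural numbers 1 <= i <= n-1; positions of S_n are 'I_n,
   with value k (0-based) standing for k+1.  sigma n i swaps i and i+1,
   i.e. the ordinals of value i-1 and i. *)
Definition valid_letter (n i : nat) : bool := (0 < i) && (i < n).

Definition sigma (n i : nat) : {perm 'I_n} :=
  match n as m return {perm 'I_m} with
  | 0 => 1%g
  | m.+1 => if valid_letter m.+1 i then tperm (inord i.-1) (inord i) else 1%g
  end.

Definition valid_word (n : nat) (s : seq nat) : bool := all (valid_letter n) s.

(* Product of a word as composition of maps:
   wordperm [:: i1; ...; il] = sigma i1 \o ... \o sigma il.
   (mathcomp's (p * q) x = q (p x), hence the order below.) *)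
Fixpoint wordperm (n : nat) (s : seq nat) : {perm 'I_n} :=
  match s with
  | [::] => 1%g
  | i :: t => (wordperm n t * sigma n i)%g
  end.

Definition reduced_word (n : nat) (w : {perm 'I_n}) (s : seq nat) : Prop :=
  [/\ valid_word n s, wordperm n s = w &
      forall t, valid_word n t -> wordperm n t = w -> size s <= size t].

Definition in_supp (n : nat) (w : {perm 'I_n}) (i : nat) : Prop :=
  exists s, reduced_word w s /\ i \in s.

Definition bruhat_le (n : nat) (u w : {perm 'I_n}) : Prop :=
  exists s t, [/\ reduced_word u s, reduced_word w t & subseq s t].

Definition between (s : seq nat) (p x : nat) : bool :=
  (x \in take p s) && (x \in drop p.+1 s).

Definition unconfined (s : seq nat) (i : nat) : bool :=
  [&& count_mem i s == 1,
      ~~ between s (index i s) i.+1 &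
      ~~ between s (index i s) i.-1].

Definition unconfined_in (n : nat) (w : {perm 'I_n}) (i : nat) : Prop :=
  forall s, reduced_word w s -> unconfined s i.

From mathcomp Require Import all_boot all_fingroup zify.

(* Everything is read off the rank function rk f p v = #{q < p | f q < v} of a
   permutation.  Reduced words are ascending (a descent would lower the number
   of inversions), and an ascent at letter j only changes row j of rk, lowering
   it by at most one.  Hence along a reduced word every rank decreases, and a
   rank that ends at its bound min(p, v) stayed at that bound throughout.
   From this, i lies in the support of u iff rk u i i < i, and i is unconfined
   in a reduced word of u iff rk u i i = i - 1 and, for each neighbour i +- 1,
   one of the two ranks rk u i (i +- 1), rk u (i +- 1) i is at its bound
   ([unconfined_ranks]).  This condition depends on u only, so it passes from
   one reduced word to all of them.  Finally, a subword of a reduced word of w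
   that keeps the single occurrence of i keeps it unconfined; a subword that
   drops i is a reduced word of u without i, so i is not in the support of u. *)

Set Implicit Arguments. Unset Strict Implicit. Unset Printing Implicit Defensive.
Arguments sigma : simpl never.

Lemma split_first (T : eqType) (x : T) (s : seq T) :
  x \in s -> exists a b, s = a ++ x :: b /\ x \notin a.
Proof.
elim: s => // y s IH; rewrite inE; case: (eqVneq x y) => [<- _ | ne /= /IH[a [b [-> xa]]]].
  by exists [::], s.
by exists (y :: a), b; rewrite inE negb_or ne.
Qed.

Lemma subseq_cat_cons (T : eqType) (s a b : seq T) x :
  subseq s (a ++ x :: b) -> x \in s -> x \notin a -> x \notin b ->
  exists s1 s2, [/\ s = s1 ++ x :: s2, {subset s1 <= a} & {subset s2 <= b}].
Proof.
case/subseqP => mk size_mk -> xs xa xb.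
move: xs; rewrite -(cat_take_drop (size a) mk) mask_cat; last first.
  by rewrite size_take size_mk size_cat /= addnS ltnS leq_addr.
case E: (drop (size a) mk) => [|[] m2].
- by move: (congr1 size E); rewrite size_drop size_mk size_cat /=; lia.
- move=> _; exists (mask (take (size a) mk) a), (mask m2 b).
  by split => // y /mem_mask.
- rewrite /= mem_cat; case/orP => /mem_mask; by [rewrite (negbTE xa) | rewrite (negbTE xb)].
Qed.

Lemma mem_unconfined s i : unconfined s i -> i \in s.
Proof. by case/and3P => /eqP c _ _; rewrite -has_pred1 has_count c. Qed.

Lemma unconfined_cat a b i : i \notin a ->
  unconfined (a ++ i :: b) i =
  [&& i \notin b, ~~ ((i.+1 \in a) && (i.+1 \in b)) & ~~ ((i.-1 \in a) && (i.-1 \in b))].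
Proof.
move=> ia; rewrite /unconfined /between index_cat (negbTE ia) /= eqxx addn0.
rewrite take_size_cat // drop_cat ltnNge leqnSn /= subSnn /= drop0.
rewrite count_cat /= eqxx (count_memPn ia) add0n add1n eqSS.
by congr (_ && _); rewrite -[i \notin b]/(~~ _) -has_pred1 has_count lt0n negbK.
Qed.

Lemma unconfined_subseq s t i : subseq s t -> unconfined t i -> i \in s -> unconfined s i.
Proof.
move=> st unc_t is_.
have [t1 [t2 [Et it1]]] := split_first (mem_unconfined unc_t).
move: unc_t st; rewrite Et unconfined_cat // => /and3P[it2 nB nA] st.
have [s1 [s2 [-> sub1 sub2]]] := subseq_cat_cons st is_ it1 it2.
rewrite unconfined_cat; last by apply: contra it1; apply: sub1.
apply/and3P; split.
- by apply: contra it2; apply: sub2.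
- by apply: contra nB => /andP[/sub1 -> /sub2 ->].
- by apply: contra nA => /andP[/sub1 -> /sub2 ->].
Qed.

Lemma sum_ord_lt n k : \sum_(q < n) (q < k : nat) = minn k n.
Proof.
elim: n => [|n IH]; first by rewrite big_ord0 minn0.
by rewrite big_ord_recr /= IH; case: (ltnP n k) => h /=; lia.
Qed.

Definition swapn (j x : nat) : nat :=
  if x == j.-1 then j else if x == j then j.-1 else x.

(* Reindexing the inversions of f by the transposition (j-1 j): only the pair
   (j, j-1) changes status, and it becomes an inversion when j-1, j was an ascent. *)
Lemma swapn_inversion j x y X Y : 0 < j ->
  (x = j.-1 -> y = j -> X < Y) -> (x = j -> y = j.-1 -> Y < X) ->
  ((swapn j x < swapn j y) && (Y < X) : nat)
  = ((x < y) && (Y < X) : nat) + ((y == j.-1) && (x == j)).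
Proof.
rewrite /swapn => j0 h1 h2.
case: (eqVneq x j.-1) => e1; case: (eqVneq x j) => e2;
case: (eqVneq y j.-1) => e3; case: (eqVneq y j) => e4; rewrite /=; try lia;
case: (ltnP Y X) => e5; rewrite ?andbT ?andbF //=;
case: ltnP => e6; case: ltnP => e7; rewrite /=; lia.
Qed.

Section RankFunction.
Variable m : nat.
Local Notation N := m.+1.
Implicit Types (f g h u : {perm 'I_N}) (s t : seq nat).

Lemma eq_inord (x : 'I_N) k : k < N -> (x == inord k) = (nat_of_ord x == k).
Proof. by move=> kN; rewrite -(inj_eq val_inj) /= inordK. Qed.

Lemma sigmaE j (x : 'I_N) : valid_letter N j -> val (sigma N j x) = swapn j x.
Proof.
move=> vj; rewrite /sigma vj /swapn; case/andP: vj => j0 jN.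
case: tpermP => [->|->|nx1 nx]; rewrite /= ?inordK ?eqxx //; try lia.
- by rewrite ifN //; lia.
- by rewrite -!eq_inord ?(introF eqP nx1) ?(introF eqP nx) //; lia.
Qed.

Lemma sigmaK j : valid_letter N j -> involutive (sigma N j).
Proof. by move=> vj; rewrite /sigma vj; apply: tpermK. Qed.

Lemma sigma_mulK j f : valid_letter N j -> (sigma N j * (sigma N j * f))%g = f.
Proof. by move=> vj; apply/permP => x; rewrite !permM sigmaK. Qed.

(* Only meaningful for k < N: [inord k] is position 0 otherwise. *)
Definition permv f (k : nat) : nat := f (inord k).

Lemma permv_sigma j f : valid_letter N j ->
  permv (sigma N j * f) j.-1 = permv f j /\ permv (sigma N j * f) j = permv f j.-1.
Proof.
move=> vj; have [j0 jN] := andP vj.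
have e1 : sigma N j (inord j.-1) = inord j.
  by apply: val_inj; rewrite sigmaE //= /swapn !inordK ?eqxx //; lia.
have e2 : sigma N j (inord j) = inord j.-1.
  by apply: val_inj; rewrite sigmaE //= /swapn !inordK ?eqxx ?ifN //; lia.
by rewrite /permv !permM e1 e2.
Qed.

Lemma permv_neq j f : valid_letter N j -> permv f j.-1 != permv f j.
Proof.
case/andP => j0 jN; rewrite /permv (inj_eq val_inj) (inj_eq (@perm_inj _ f)).
by rewrite eq_inord ?inordK //; lia.
Qed.

Lemma sum_ord_eq k (P : pred 'I_N) :
  \sum_(q < N) ((nat_of_ord q == k) && P q : nat) = (k < N) && P (inord k).
Proof.
case: ltnP => kN /=.
- rewrite (bigD1 (inord k)) //= inordK // eqxx big1 ?addn0 // => q /negbTE.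
  by rewrite eq_inord // => ->.
- by rewrite big1 // => q _; have := ltn_ord q; case: eqP => // ->; lia.
Qed.

Definition rk f (p v : nat) : nat := \sum_(q < N) ((q < p) && (f q < v)).

Lemma rk_le_prefix f p v : rk f p v <= p.
Proof.
apply: (@leq_trans (\sum_(q < N) (q < p : nat))); last by rewrite sum_ord_lt geq_minl.
by apply: leq_sum => q _; case: (q < p); rewrite ?leq_b1.
Qed.

Lemma rk_le_value f p v : rk f p v <= v.
Proof.
apply: (@leq_trans (\sum_(q < N) (f q < v : nat))).
  by apply: leq_sum => q _; case: (q < p); rewrite ?leq_b1.
rewrite (reindex_inj (@perm_inj _ f^-1)) /=.
under eq_bigr do rewrite permKV.
by rewrite sum_ord_lt geq_minl.
Qed.

Lemma rk1 p v : rk 1 p v = minn (minn p v) N.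
Proof. by rewrite -sum_ord_lt; apply: eq_bigr => q _; rewrite perm1 leq_min. Qed.

Lemma rkS f p v : rk f p.+1 v = rk f p v + ((p < N) && (permv f p < v)).
Proof.
rewrite -(sum_ord_eq p (fun q => f q < v)) /rk -big_split /=; apply: eq_bigr => q _.
by rewrite ltnS leq_eqVlt; case: eqP => [->|]; rewrite ?ltnn //=; case: (_ < v); lia.
Qed.

Lemma rkS_lt f p v : p < N -> rk f p.+1 v = rk f p v + (permv f p < v).
Proof. by rewrite rkS => ->. Qed.

Lemma rk_prefix_mono f p p' v : p <= p' -> rk f p v <= rk f p' v.
Proof.
move=> le_pp'; apply: leq_sum => q _; case: (f q < v); rewrite ?andbF ?andbT //.
by case: (boolP (q < p)) => h //; rewrite (leq_trans h le_pp').
Qed.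

Lemma rk_prefixD f p d v : rk f (p + d) v <= rk f p v + d.
Proof.
elim: d => [|d IH]; first by rewrite !addn0.
by rewrite addnS rkS; move: IH; case: (_ && _); lia.
Qed.

Lemma rk_eq_value f p v q : rk f p v = v -> p <= q -> q < N -> v <= permv f q.
Proof.
move=> full le_pq qN; have := rk_prefix_mono f v le_pq; have := rk_le_value f q.+1 v.
by rewrite rkS_lt //; case: ltnP => //; lia.
Qed.

Lemma rk_eq_prefix f p v q : rk f p v = p -> q < p -> q < N -> permv f q < v.
Proof.
move=> full lt_qp qN; case: ltnP => // ge_v.
have := rk_prefixD f q.+1 (p - q.+1) v; rewrite rkS_lt // ltnNge ge_v subnKC //.
by have := rk_le_prefix f q v; lia.
Qed.

Lemma rk_diag_full j f : valid_letter N j -> rk f j j = j -> permv f j.-1 < j <= permv f j.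
Proof.
case/andP=> j0 jN full; rewrite (rk_eq_value full) // andbT.
by apply: (rk_eq_prefix full); lia.
Qed.

Lemma rk_sigma_neq j f p v : valid_letter N j -> p != j ->
  rk (sigma N j * f) p v = rk f p v.
Proof.
move=> vj /eqP pj; rewrite /rk (reindex_inj (@perm_inj _ (sigma N j))) /=.
apply: eq_bigr => q _; rewrite permM sigmaK // sigmaE // /swapn; case/andP: vj => j0 jN.
congr (nat_of_bool (_ && _)).
by case: (eqVneq (nat_of_ord q) j.-1) => e1; case: (eqVneq (nat_of_ord q) j) => e2;
  rewrite /=; try lia; apply/idP/idP; lia.
Qed.

Lemma rk_sigma j f v : valid_letter N j ->
  rk (sigma N j * f) j v + (permv f j.-1 < v) = rk f j v + (permv f j < v).
Proof.
move=> vj; have [j0 jN] := andP vj.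
have pick k : k < N -> (permv f k < v : nat) = \sum_(q < N) ((nat_of_ord q == k) && (f q < v)).
  by move=> kN; rewrite sum_ord_eq kN.
rewrite (pick j.-1) ?(pick j) //; last lia.
rewrite /rk (reindex_inj (@perm_inj _ (sigma N j))) /= -!big_split /=.
apply: eq_bigr => q _; rewrite permM sigmaK // sigmaE // /swapn.
case: (f q < v); rewrite ?andbT ?andbF //.
by case: (eqVneq (nat_of_ord q) j.-1) => e1; case: (eqVneq (nat_of_ord q) j) => e2;
  rewrite /=; try lia; case: ltnP; lia.
Qed.

Lemma rk_ascent j f p v : valid_letter N j -> permv f j.-1 < permv f j ->
  rk (sigma N j * f) p v <= rk f p v.
Proof.
move=> vj asc; case: (eqVneq p j) => [->|pj]; last by rewrite rk_sigma_neq.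
by have := rk_sigma f v vj; case: ltnP; case: ltnP; lia.
Qed.

Lemma rk_sigma_diag j f : valid_letter N j -> rk f j j = j -> rk (sigma N j * f) j j = j.-1.
Proof.
move=> vj full; have /andP[lt_pred ge_j] := rk_diag_full vj full.
by have := rk_sigma f j vj; rewrite full lt_pred ltnNge ge_j; lia.
Qed.

Definition inversions f : nat := \sum_(a < N) \sum_(b < N) ((a < b) && (f b < f a)).

Lemma inversions1 : inversions 1 = 0.
Proof.
rewrite /inversions big1 // => a _; rewrite big1 // => b _.
by rewrite !perm1; case: ltngtP.
Qed.

Lemma inversions_ascent j f : valid_letter N j -> permv f j.-1 < permv f j ->
  inversions (sigma N j * f) = (inversions f).+1.
Proof.
move=> vj asc; have [j0 jN] := andP vj.
have ord_of k (x : 'I_N) : nat_of_ord x = k -> x = inord k by move=> <-; rewrite inord_val.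
rewrite /inversions (reindex_inj (@perm_inj _ (sigma N j))) /=.
transitivity (\sum_(a < N) \sum_(b < N)
   (((a < b) && (f b < f a) : nat) + ((nat_of_ord b == j.-1) && (nat_of_ord a == j)))).
  apply: eq_bigr => a _; rewrite (reindex_inj (@perm_inj _ (sigma N j))) /=.
  apply: eq_bigr => b _; rewrite !permM !sigmaK // !sigmaE //.
  by apply: swapn_inversion => // /ord_of-> /ord_of->.
rewrite [LHS](eq_bigr (fun a : 'I_N =>
  \sum_(b < N) ((a < b) && (f b < f a) : nat) + ((nat_of_ord a == j) && true))).
  by rewrite big_split /= sum_ord_eq jN addn1.
move=> a _; rewrite big_split /= sum_ord_eq andbT.
by rewrite (leq_ltn_trans (leq_pred j) jN).
Qed.

Lemma inversions_descent j f : valid_letter N j -> permv f j < permv f j.-1 ->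
  (inversions (sigma N j * f)).+1 = inversions f.
Proof.
move=> vj desc; have [e1 e2] := permv_sigma f vj.
by have := @inversions_ascent j (sigma N j * f) vj; rewrite e1 e2 sigma_mulK // => <-.
Qed.

Definition wordmul f t := (wordperm N t * f)%g.

Fixpoint ascending f t : bool :=
  if t is j :: t' then (permv f j.-1 < permv f j) && ascending (sigma N j * f) t'
  else true.

Lemma wordmul_nil f : wordmul f [::] = f.
Proof. exact: mul1g. Qed.

Lemma wordmul_cons f j t : wordmul f (j :: t) = wordmul (sigma N j * f) t.
Proof. by rewrite /wordmul /= mulgA. Qed.

Lemma wordmul_cat f a b : wordmul f (a ++ b) = wordmul (wordmul f a) b.
Proof.
by elim: a f => [|j a IH] f; rewrite ?wordmul_nil // cat_cons !wordmul_cons IH.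
Qed.

Lemma wordmul1 t : wordmul 1 t = wordperm N t.
Proof. exact: mulg1. Qed.

Lemma ascending_cat f a b : ascending f (a ++ b) = ascending f a && ascending (wordmul f a) b.
Proof.
by elim: a f => [|j a IH] f /=; rewrite ?wordmul_nil // IH wordmul_cons andbA.
Qed.

Lemma wordperm_rcons t j : wordperm N (rcons t j) = (sigma N j * wordperm N t)%g.
Proof. by elim: t => [|x t IH] /=; rewrite ?mul1g ?mulg1 // IH mulgA. Qed.

Lemma inversions_wordmul_le f t : valid_word N t ->
  inversions (wordmul f t) <= inversions f + size t.
Proof.
elim: t f => [|j t IH] f /=; first by rewrite wordmul_nil addn0.
case/andP => vj vt; rewrite wordmul_cons; apply: leq_trans (IH _ vt) _.
case: (ltngtP (permv f j.-1) (permv f j)) => h.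
- by rewrite inversions_ascent //; lia.
- by have := inversions_descent vj h; lia.
- by move: (permv_neq f vj); rewrite h eqxx.
Qed.

Lemma inversions_wordmul_lt f t : valid_word N t -> ~~ ascending f t ->
  inversions (wordmul f t) < inversions f + size t.
Proof.
elim: t f => [|j t IH] f //=.
case/andP => vj vt; rewrite wordmul_cons negb_and.
case: (ltngtP (permv f j.-1) (permv f j)) => h /=.
- by move/(IH _ vt)/leq_trans; apply; rewrite inversions_ascent //; lia.
- move=> _; apply: leq_ltn_trans (inversions_wordmul_le _ vt) _.
  by have := inversions_descent vj h; lia.
- by move: (permv_neq f vj); rewrite h eqxx.
Qed.

Lemma no_descent_id f : (forall j, 0 < j < N -> permv f j.-1 < permv f j) -> f = 1%g.
Proof.
move=> asc.
have ge k : k < N -> k <= permv f k.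
  by elim: k => // k IH kN; have /= := asc k.+1 kN; have := IH (ltnW kN); lia.
have le d k : k + d = m -> permv f k + d <= m.
  elim: d k => [|d IH] k e; first by have := ltn_ord (f (inord k)); rewrite /permv; lia.
  have lt_kN : k.+1 < N by lia.
  by have /= := asc k.+1 lt_kN; have := IH k.+1 (etrans (addSnnS k d) e); lia.
apply/permP => x; apply: val_inj; rewrite perm1 /=.
have := ge x (ltn_ord x); have := le (m - x) x (subnKC (ltn_ord x : x <= m)).
by rewrite /permv inord_val; lia.
Qed.

Lemma exists_word_le_inversions f :
  exists t, [/\ valid_word N t, wordperm N t = f & size t <= inversions f].
Proof.
have [k] := ubnP (inversions f); elim: k f => [|k IH] f; first by rewrite ltn0.
move=> lt_k; case: (boolP [exists j : 'I_N, (0 < j) && (permv f j < permv f j.-1)]).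
- case/existsP => j /andP[j0 desc]; have vj : valid_letter N j by rewrite /valid_letter j0 /=.
  have inv_f := inversions_descent vj desc.
  have lt_k' : inversions (sigma N j * f) < k by rewrite -ltnS inv_f.
  have [t [vt wt st]] := IH _ lt_k'.
  exists (rcons t j); split; first by rewrite /valid_word all_rcons vj.
  + by rewrite wordperm_rcons wt sigma_mulK.
  + by rewrite size_rcons -inv_f ltnS.
- move/existsPn => no_desc; exists [::]; split => //.
  apply/esym/no_descent_id => j /andP[j0 jN]; have vj : valid_letter N j by apply/andP.
  have := no_desc (Ordinal jN); rewrite /= j0 /= -leqNgt => le_j.
  by rewrite ltn_neqAle (permv_neq f vj) le_j.
Qed.

Lemma reduced_ascending u s : reduced_word u s -> ascending 1 s.
Proof.
case=> vs ws minimal; have [t [vt wt st]] := exists_word_le_inversions u.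
apply: contraLR (minimal t vt wt) => not_asc; rewrite -ltnNge.
apply: leq_ltn_trans st _.
by have := inversions_wordmul_lt vs not_asc; rewrite wordmul1 ws inversions1.
Qed.

Lemma rk_ascending f t p v : valid_word N t -> ascending f t -> rk (wordmul f t) p v <= rk f p v.
Proof.
elim: t f => [|j t IH] f /=; first by rewrite wordmul_nil.
case/andP => vj vt /andP[asc_j asc_t]; rewrite wordmul_cons.
exact: leq_trans (IH _ vt asc_t) (rk_ascent p v vj asc_j).
Qed.

Lemma rk_wordmul_notin f t p v : valid_word N t -> p \notin t -> rk (wordmul f t) p v = rk f p v.
Proof.
elim: t f => [|j t IH] f /=; first by rewrite wordmul_nil.
case/andP => vj vt; rewrite inE negb_or => /andP[pj pt].
by rewrite wordmul_cons IH // rk_sigma_neq.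
Qed.

Lemma rk_mem_ascending j t : valid_word N t -> ascending 1 t -> j \in t ->
  rk (wordperm N t) j j < j.
Proof.
move=> vt asc jt; have /andP[j0 jN] : valid_letter N j := allP vt j jt.
have [a [b [Et ja]]] := split_first jt.
move: vt asc; rewrite Et -wordmul1 wordmul_cat wordmul_cons /valid_word all_cat ascending_cat /=.
case/and3P => va vj vb /and3P[_ asc_j asc_b].
have full : rk (wordmul 1 a) j j = j by rewrite rk_wordmul_notin // rk1; lia.
apply: leq_ltn_trans (rk_ascending j j vb asc_b) _.
by rewrite rk_sigma_diag //; lia.
Qed.

Lemma rk_diag_wordperm j s : valid_word N s -> ascending 1 s -> j <= N ->
  (rk (wordperm N s) j j == j) = (j \notin s).
Proof.
move=> vs asc jN; case: (boolP (j \in s)) => js /=.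
- by rewrite ltn_eqF // rk_mem_ascending.
- by rewrite -wordmul1 rk_wordmul_notin // rk1 !minnn (minn_idPl jN) eqxx.
Qed.

Lemma notin_supp_of_reduced u s i : reduced_word u s -> i \notin s -> ~ in_supp u i.
Proof.
case=> vs ws _ is_ [t [rt it]]; have [vt wt _] := rt.
have /andP[_ iN] : valid_letter N i := allP vt i it.
have := rk_mem_ascending vt (reduced_ascending rt) it.
by rewrite wt -ws -wordmul1 rk_wordmul_notin // rk1; lia.
Qed.

Section Unconfined.
Variable i : nat.
Hypothesis i_valid : valid_letter N i.

Definition unconfined_ranks f : Prop :=
  [/\ rk f i i = i.-1,
      rk f i i.-1 = i.-1 \/ rk f i.-1 i = i.-1
    & rk f i i.+1 = i \/ rk f i.+1 i = i].

Lemma rk_pred_full_ge f : rk f i i = i.-1 -> rk f i.-1 i = i.-1 -> i <= permv f i.-1.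
Proof.
move=> R A; have [i0 iN] := andP i_valid.
have := @rkS_lt f i.-1 i (leq_ltn_trans (leq_pred i) iN).
by rewrite prednK // R A; case: ltnP => //; lia.
Qed.

Lemma rk_succ_full_lt f : rk f i i = i.-1 -> rk f i.+1 i = i -> permv f i < i.
Proof.
move=> R B; have [i0 iN] := andP i_valid.
by have := rkS_lt f i iN; rewrite R B; case: ltnP => //; lia.
Qed.

Lemma rk_sigma_first_pred g : rk g i i = i -> rk (sigma N i * g) i.-1 i = i.-1.
Proof.
move=> full; have [i0 iN] := andP i_valid.
have /andP[lt_pred _] := rk_diag_full i_valid full.
rewrite rk_sigma_neq // ?neq_ltn ?ltn_predL ?i0 //.
have := @rkS_lt g i.-1 i (leq_ltn_trans (leq_pred i) iN).
by rewrite prednK // full lt_pred; lia.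
Qed.

Lemma rk_sigma_first_succ g : rk g i i = i -> rk (sigma N i * g) i.+1 i = i.
Proof.
move=> full; have [i0 iN] := andP i_valid.
have /andP[_ ge_i] := rk_diag_full i_valid full.
rewrite rk_sigma_neq // ?neq_ltn ?ltnSn ?orbT //.
by rewrite rkS_lt // full ltnNge ge_i /= addn0.
Qed.

Lemma rk_sigma_first_pred_diag g : rk g i i = i ->
  rk (sigma N i * g) i i.-1 = rk g i.-1 i.-1.
Proof.
move=> full; have [i0 iN] := andP i_valid.
have /andP[_ ge_i] := rk_diag_full i_valid full.
have := rk_sigma g i.-1 i_valid; have := @rkS_lt g i.-1 i.-1 (leq_ltn_trans (leq_pred i) iN).
by rewrite prednK //; lia.
Qed.

Lemma rk_sigma_first_succ_diag g : rk g i i = i ->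
  (rk (sigma N i * g) i i.+1).+1 = rk g i.+1 i.+1.
Proof.
move=> full; have [i0 iN] := andP i_valid.
have /andP[lt_pred _] := rk_diag_full i_valid full.
by have := rk_sigma g i.+1 i_valid; have := rkS_lt g i.+1 iN; lia.
Qed.

(* Ranks only decrease from g to h and are bounded by p and v, so every rank
   that [unconfined_ranks h] puts at its bound is already at that bound in g. *)
Lemma unconfined_ranks_le g h : (forall p v, rk h p v <= rk g p v) ->
  rk g i i <= i.-1 -> unconfined_ranks h -> unconfined_ranks g.
Proof.
move=> le_hg Rg [R A B]; split.
- by have := le_hg i i; lia.
- case: A => A; [left | right].
  + by have := le_hg i i.-1; have := rk_le_value g i i.-1; lia.
  + by have := le_hg i.-1 i; have := rk_le_prefix g i.-1 i; lia.
- case: B => B; [left | right].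
  + by have := le_hg i i.+1; have := rk_le_prefix g i i.+1; lia.
  + by have := le_hg i.+1 i; have := rk_le_value g i.+1 i; lia.
Qed.

Lemma unconfined_ranks_no_ascent g : permv g i.-1 < permv g i ->
  unconfined_ranks g -> ~ unconfined_ranks (sigma N i * g).
Proof.
move=> asc [R A B] [R' A' B']; have [i0 iN] := andP i_valid.
have ES v := rk_sigma g v i_valid.
have rowP v : rk (sigma N i * g) i.-1 v = rk g i.-1 v by rewrite rk_sigma_neq //; lia.
have rowS v : rk (sigma N i * g) i.+1 v = rk g i.+1 v by rewrite rk_sigma_neq //; lia.
have pred_ge : i.-1 <= permv g i.-1.
  case: A => [A1|A2]; last by have := rk_pred_full_ge R A2; lia.
  case: A' => [A1'|A2']; last by rewrite rowP in A2'; have := rk_pred_full_ge R A2'; lia.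
  by have := ES i.-1; have := rk_eq_value A1 (leqnn i) iN; lia.
have succ_le : permv g i <= i.
  case: B => [B1|B2]; last by have := rk_succ_full_lt R B2; lia.
  case: B' => [B1'|B2']; last by rewrite rowS in B2'; have := rk_succ_full_lt R B2'; lia.
  have lt_pred : i.-1 < i by rewrite ltn_predL.
  by have := ES i.+1; have := rk_eq_prefix B1 lt_pred (ltn_trans lt_pred iN); lia.
by have := ES i; rewrite R R'; lia.
Qed.

Lemma letter_notin_ascending f t : valid_word N t -> ascending f t -> rk f i i <= i.-1 ->
  unconfined_ranks (wordmul f t) -> i \notin t.
Proof.
move=> vt asc Rf U; apply/negP => /split_first[a [b [Et _]]].
move: vt asc U; rewrite Et wordmul_cat wordmul_cons /valid_word all_cat ascending_cat /=.
set g : {perm 'I_N} := wordmul f a.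
case/and3P => va _ vb /and3P[asc_a asc_i asc_b] U.
have Rg : rk g i i <= i.-1 := leq_trans (rk_ascending i i va asc_a) Rf.
have Rg' : rk (sigma N i * g) i i <= i.-1 := leq_trans (rk_ascent i i i_valid asc_i) Rg.
have U' := unconfined_ranks_le (fun p v => rk_ascending p v vb asc_b) Rg' U.
have Ug := unconfined_ranks_le (fun p v => rk_ascent p v i_valid asc_i) Rg U'.
exact: unconfined_ranks_no_ascent asc_i Ug U'.
Qed.

Lemma succ_notin_ascending f t : valid_word N t -> ascending f t -> rk f i i <= i.-1 ->
  rk (wordmul f t) i i = i.-1 -> rk (wordmul f t) i.+1 i = i -> i.+1 \notin t.
Proof.
move=> vt asc Rf R B; apply/negP => /split_first[a [b [Et _]]].
move: vt asc R B; rewrite Et wordmul_cat wordmul_cons /valid_word all_cat ascending_cat /=.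
set g : {perm 'I_N} := wordmul f a; set h : {perm 'I_N} := (sigma N i.+1 * g)%g.
case/and3P => va vj vb /and3P[asc_a asc_j asc_b] R B.
have jN : i.+1 < N by case/andP: vj.
have row_i : rk h i i = rk g i i by rewrite rk_sigma_neq //; lia.
have Rg : rk g i i = i.-1.
  by have := rk_ascending i i va asc_a; rewrite -/g; have := rk_ascending i i vb asc_b; lia.
have Bg : rk g i.+1 i = i.
  have := rk_ascending i.+1 i vb asc_b; have := rk_ascent i.+1 i vj asc_j; rewrite -/h.
  by have := rk_le_value g i.+1 i; lia.
have Bh : rk h i.+1 i = i.
  by have := rk_ascending i.+1 i vb asc_b; have := rk_le_value h i.+1 i; lia.
have := rk_sigma g i vj; rewrite /= -/h Bg Bh.
by have := rk_succ_full_lt Rg Bg; have := rk_eq_value Bg (leqnn i.+1) jN; lia.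
Qed.

Lemma pred_notin_ascending f t : valid_word N t -> ascending f t -> rk f i i <= i.-1 ->
  rk (wordmul f t) i i = i.-1 -> rk (wordmul f t) i.-1 i = i.-1 -> i.-1 \notin t.
Proof.
move=> vt asc Rf R A; apply/negP => /split_first[a [b [Et _]]].
move: vt asc R A; rewrite Et wordmul_cat wordmul_cons /valid_word all_cat ascending_cat /=.
set g : {perm 'I_N} := wordmul f a; set h : {perm 'I_N} := (sigma N i.-1 * g)%g.
case/and3P => va vj vb /and3P[asc_a asc_j asc_b] R A.
have [j0 jN] := andP vj.
have row_i : rk h i i = rk g i i by rewrite rk_sigma_neq //; lia.
have Rg : rk g i i = i.-1.
  by have := rk_ascending i i va asc_a; rewrite -/g; have := rk_ascending i i vb asc_b; lia.
have Ag : rk g i.-1 i = i.-1.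
  have := rk_ascending i.-1 i vb asc_b; have := rk_ascent i.-1 i vj asc_j; rewrite -/h.
  by have := rk_le_prefix g i.-1 i; lia.
have Ah : rk h i.-1 i = i.-1.
  by have := rk_ascending i.-1 i vb asc_b; have := rk_le_prefix h i.-1 i; lia.
have := rk_sigma g i vj; rewrite -/h Ag Ah.
have lt_pred : i.-2 < i.-1 by rewrite ltn_predL.
have := rk_eq_prefix Ag lt_pred (ltn_trans lt_pred jN).
by have := rk_pred_full_ge Rg Ag; lia.
Qed.

Lemma unconfined_ranks_of_unconfined s : valid_word N s -> ascending 1 s ->
  unconfined s i -> unconfined_ranks (wordperm N s).
Proof.
move=> vs asc uc; have [i0 iN] := andP i_valid.
have [s1 [s2 [Es is1]]] := split_first (mem_unconfined uc).
move: vs asc uc; rewrite Es unconfined_cat // -wordmul1 wordmul_cat wordmul_cons.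
rewrite /valid_word all_cat ascending_cat /= !wordmul1.
set g : {perm 'I_N} := wordperm N s1.
case/and3P => v1 _ v2 /and3P[a1 _ _] /and3P[is2 nB nA].
have diag j : j <= N -> (rk g j j == j) = (j \notin s1) := rk_diag_wordperm (j := j) v1 a1.
have full : rk g i i = i by apply/eqP; rewrite diag // ltnW.
have row_u p v : p \notin s2 -> rk (wordmul (sigma N i * g) s2) p v = rk (sigma N i * g) p v.
  by move=> ?; rewrite rk_wordmul_notin.
split.
- by rewrite row_u // rk_sigma_diag.
- case: (boolP (i.-1 \in s1)) => p1; [right | left].
  + have p2 : i.-1 \notin s2 by apply: contra nA => ->; rewrite p1.
    by rewrite row_u // rk_sigma_first_pred.
  + rewrite row_u // rk_sigma_first_pred_diag //; apply/eqP.
    by rewrite diag // (leq_trans (leq_pred i) (ltnW iN)).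
- case: (boolP (i.+1 \in s1)) => p1; [right | left].
  + have p2 : i.+1 \notin s2 by apply: contra nB => ->; rewrite p1.
    by rewrite row_u // rk_sigma_first_succ.
  + by rewrite row_u //; apply/eqP; rewrite -eqSS rk_sigma_first_succ_diag // diag.
Qed.

Lemma unconfined_of_unconfined_ranks s : valid_word N s -> ascending 1 s ->
  unconfined_ranks (wordperm N s) -> unconfined s i.
Proof.
move=> vs asc U; have [i0 iN] := andP i_valid.
have is_ : i \in s.
  apply/negPn/negP => is_; case: U => R _ _.
  by have := rk_diag_wordperm vs asc (ltnW iN); rewrite is_ R => /eqP; lia.
have [s1 [s2 [Es is1]]] := split_first is_.
move: vs asc U; rewrite Es unconfined_cat // -wordmul1 wordmul_cat wordmul_cons.
rewrite /valid_word all_cat ascending_cat /= !wordmul1.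
set g : {perm 'I_N} := wordperm N s1; set h : {perm 'I_N} := (sigma N i * g)%g.
case/and3P => v1 _ v2 /and3P[a1 _ a2] U.
have diag j : j <= N -> (rk g j j == j) = (j \notin s1) := rk_diag_wordperm (j := j) v1 a1.
have full : rk g i i = i by apply/eqP; rewrite diag // ltnW.
have Rh : rk h i i <= i.-1 by rewrite rk_sigma_diag.
have dom p v : rk (wordmul h s2) p v <= rk h p v := rk_ascending p v v2 a2.
case: (U) => R A B; apply/and3P; split.
- exact: letter_notin_ascending v2 a2 Rh U.
- apply/negP => /andP[in1 in2]; case: B => B.
  + have Bh : rk h i i.+1 = i by have := dom i i.+1; have := rk_le_prefix h i i.+1; lia.
    have : i.+1 \notin s1 by rewrite -diag // -rk_sigma_first_succ_diag // Bh.
    by rewrite in1.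
  + by rewrite (negbTE (succ_notin_ascending v2 a2 Rh R B)) in in2.
- apply/negP => /andP[in1 in2]; case: A => A.
  + have Ah : rk h i i.-1 = i.-1 by have := dom i i.-1; have := rk_le_value h i i.-1; lia.
    have : i.-1 \notin s1.
      by rewrite -diag ?(leq_trans (leq_pred i) (ltnW iN)) // -rk_sigma_first_pred_diag // Ah.
    by rewrite in1.
  + by rewrite (negbTE (pred_notin_ascending v2 a2 Rh R A)) in in2.
Qed.

End Unconfined.

Lemma unconfined_in_of_reduced u s i : reduced_word u s -> unconfined s i -> unconfined_in u i.
Proof.
move=> rs uc t rt; case: (rs) => vs ws _; case: (rt) => vt wt _.
have vi : valid_letter N i := allP vs i (mem_unconfined uc).
have U := unconfined_ranks_of_unconfined vi vs (reduced_ascending rs) uc.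
rewrite ws -wt in U.
exact (unconfined_of_unconfined_ranks vi vt (reduced_ascending rt) U).
Qed.

End RankFunction.

Theorem lemma2p10 (n : nat) (w : {perm 'I_n}) (i : nat) :
  in_supp w i -> unconfined_in w i ->
  forall u : {perm 'I_n}, bruhat_le u w ->
    ~ in_supp u i \/ unconfined_in u i.
Proof.
case: n w => [|m] w _ unconfined_w u [s [t [rs rt st]]].
  by left; case=> s' [[/allP vs _ _] /vs]; rewrite /valid_letter ltn0 andbF.
case: (boolP (i \in s)) => [is_ | nis]; [right | left].
- exact: unconfined_in_of_reduced rs (unconfined_subseq st (unconfined_w t rt) is_).
- exact: notin_supp_of_reduced rs nis.
Qed.
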